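(* Let $G$ be an ordered graph, and let $S,T\subseteq E(G)$ with $|S|>|T|$. Then there is an edge $e\in S\setminus T$ with $$\mathrm{h}_{G\setminus T}(e)\ge \min_{f\in S}\mathrm{h}_G(f).$$
   Context: An ordered graph is a finite simple graph $G$ equipped with a total order $\le_G$ on $E(G)$ and a total order $\le^V_G$ on $V(G)$; subgraphs inherit these orders. Let $\mathbb N=\{1,2,\dots\}$. Define $\preceq_{\mathrm{lex}}$ on $\mathbb N\times V(G)$ by $(i,v)\preceq_{\mathrm{lex}}(i',v')$ iff $i<i'$, or $i=i'$ and $v\le^V_G v'$. The height table $\mathrm{HT}(G)$ is a partially filled array indexed by $\mathbb N\times V(G)$, built by going through all $(i,v)$ in $\preceq_{\mathrm{lex}}$-increasing order and setting the entry at $(i,v)$ to be the $\le_G$-largest edge containing $v$ not yet entered into the table (blank if none remain). Every edge is entered exactly once; $\mathrm{ht}_G(e)=(\mathrm{h}_G(e),\mathrm{v}_G(e))$ is the position of $e$, with $\mathrm{h}_G(e)$ its row (height) and $\mathrm{v}_G(e)$ its column. $G\setminus T$ denotes the graph on $V(G)$ with edge set $E(G)\setminus T$. *)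

From mathcomp Require Import all_boot.
Set Implicit Arguments. Unset Strict Implicit. Unset Printing Implicit Defensive.

(* An ordered graph on a finite vertex type V:
   - edges: E : {set {set V}}, every edge a 2-element set (finite simple graph);
   - vertex order: given by an injective key rv : V -> nat (u <=^V v iff rv u <= rv v);
   - edge order:   given by a key ke : {set V} -> nat, injective on E
                   (e <=_G f iff ke e <= ke f).
   Subgraphs (e.g. G \ T, with edge set E :\: T) inherit rv and ke. *)

Section HeightTable.
Variable V : finType.
Variable rv : V -> nat.
Variable ke : {set V} -> nat.

Definition vorder : seq V := sort (fun x y => rv x <= rv y) (enum V).

Definition maxedge (R : {set {set V}}) (v : V) : option {set V} :=
  [pick e in R | (v \in e) && [forall f in R, (v \in f) ==> (ke f <= ke e)]].

(* process the row i: go through the vertices in order; returns the remaining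
   edges and the entries (edge, row, column) filled in this row *)
Fixpoint rowpass (i : nat) (vs : seq V) (R : {set {set V}})
  : {set {set V}} * seq ({set V} * nat * V) :=
  match vs with
  | [::] => (R, [::])
  | v :: vs' =>
    match maxedge R v with
    | None => rowpass i vs' R
    | Some e => let p := rowpass i vs' (R :\ e) in (p.1, ((e, i), v) :: p.2)
    end
  end.

Fixpoint allrows (k i : nat) (R : {set {set V}}) : seq ({set V} * nat * V) :=
  match k with
  | 0 => [::]
  | k'.+1 => let p := rowpass i vorder R in p.2 ++ allrows k' i.+1 p.1
  end.

(* all entries of the height table HT(G) of the graph with edge set E
   (rows are numbered from 1; #|E| rows suffice since every nonempty row
   removes at least one edge) *)
Definition HT (E : {set {set V}}) : seq ({set V} * nat * V) := allrows #|E| 1 E.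

Definition hgt (E : {set {set V}}) (e : {set V}) : nat :=
  let s := HT E in nth 0 [seq x.1.2 | x <- s] (index e [seq x.1.1 | x <- s]).

End HeightTable.

(* Write U_k(R) for the edges of R not yet entered after the first k rows of HT(R),
   so that h_R(e) > k iff e is in U_k(R), and let k + 1 = min_{f in S} h_G(f), so that
   S is contained in U_k(E).  Two stability properties of the row passes do the rest.
   Deleting edges that survive the first k rows does not disturb those rows:
   U_k(E \ (S ∩ T)) = U_k(E) \ (S ∩ T).  And if R' ⊆ R with |R \ R'| <= n, then
   U_k(R') ⊆ U_k(R) with |U_k(R) \ U_k(R')| <= n, because at each step of a pass the
   two runs either delete the same edge or the run on R deletes an edge missing from R'.
   For R = E \ (S ∩ T) and R' = E \ T, at most |T \ S| < |S \ T| edges of S \ T leave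
   U_k, so some e in S \ T stays in U_k(E \ T), i.e. h_{G \ T}(e) > k. *)
From mathcomp Require Import all_boot zify.
Set Implicit Arguments. Unset Strict Implicit. Unset Printing Implicit Defensive.

Section RowLookup.
Variables A B : eqType.

Definition row_of (s : seq (A * nat * B)) (e : A) : nat :=
  nth 0 [seq x.1.2 | x <- s] (index e [seq x.1.1 | x <- s]).

Lemma row_of_cat s1 s2 e :
  row_of (s1 ++ s2) e =
  if e \in [seq x.1.1 | x <- s1] then row_of s1 e else row_of s2 e.
Proof.
rewrite /row_of !map_cat index_cat.
case: ifP => e_s1; rewrite nth_cat !size_map.
  by rewrite -(size_map (fun x => x.1.1) s1) index_mem e_s1.
by rewrite ltnNge leq_addr addKn.
Qed.

Lemma row_ofP s e : e \in [seq x.1.1 | x <- s] -> exists b, (e, row_of s e, b) \in s.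
Proof.
move=> e_s; have /mapP[x0 _ _] := e_s.
set j := index e [seq x.1.1 | x <- s].
have lt_j : j < size s by rewrite -(size_map (fun x => x.1.1)) index_mem.
have nth_e : (nth x0 s j).1.1 = e.
  by rewrite -(nth_map x0 x0.1.1 (fun x => x.1.1)) // nth_index.
have nth_row : (nth x0 s j).1.2 = row_of s e by rewrite /row_of (nth_map x0).
by exists (nth x0 s j).2; rewrite -nth_row -nth_e -!surjective_pairing mem_nth.
Qed.

End RowLookup.

Section HeightTableTheory.
Variables (V : finType) (rv : V -> nat) (ke : {set V} -> nat) (E : {set {set V}}).
Hypothesis edge_neq0 : forall e, e \in E -> e != set0.
Hypothesis ke_inj : {in E &, injective ke}.

Implicit Types (R X : {set {set V}}) (e f : {set V}) (v : V).

Variant maxedge_spec R v : option {set V} -> Type :=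
  | MaxedgeSome e of e \in R & v \in e & (forall f, f \in R -> v \in f -> ke f <= ke e) :
      maxedge_spec R v (Some e)
  | MaxedgeNone of (forall f, f \in R -> v \notin f) : maxedge_spec R v None.

Lemma maxedgeP R v : maxedge_spec R v (maxedge ke R v).
Proof.
rewrite /maxedge; case: pickP => [e /andP[eR /andP[ve /forall_inP e_max]] | no_max].
  by constructor=> // f fR vf; exact: implyP (e_max f fR) vf.
constructor=> f fR; apply/negP => vf.
have [g /andP[gR vg] g_max] :=
  @arg_maxnP _ f (fun g => (g \in R) && (v \in g)) ke (introT andP (conj fR vf)).
move: (no_max g); rewrite gR vg /=; move/negP; apply; apply/forall_inP => h hR.
by apply/implyP => vh; apply: g_max; rewrite hR vh.
Qed.

Lemma maxedge_eq R v a : R \subset E -> a \in R -> v \in a ->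
  (forall f, f \in R -> v \in f -> ke f <= ke a) -> maxedge ke R v = Some a.
Proof.
move=> RE aR va a_max; case: maxedgeP => [b bR vb b_max | no_max].
  congr Some; apply: ke_inj; rewrite ?(subsetP RE) //.
  by apply/eqP; rewrite eqn_leq a_max // b_max.
by rewrite (negPf (no_max a aR)) in va.
Qed.

Lemma maxedge_none R v : (forall f, f \in R -> v \notin f) -> maxedge ke R v = None.
Proof. by case: maxedgeP => // e eR ve _ /(_ e eR); rewrite ve. Qed.

Definition row_step R v := if maxedge ke R v is Some e then R :\ e else R.
Definition row_rest R := foldl row_step R (vorder rv).
Definition unfilled k R := iter k row_rest R.

Lemma rowpass_rest i vs R : (rowpass ke i vs R).1 = foldl row_step R vs.
Proof.
by elim: vs R => //= v vs IH R; rewrite /row_step; case: maxedge => [e|] /=; rewrite IH.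
Qed.

Lemma row_step_sub R v : row_step R v \subset R.
Proof. by rewrite /row_step; case: maxedge => // e; exact: subD1set. Qed.

Lemma foldl_row_step_sub vs R : foldl row_step R vs \subset R.
Proof. by elim: vs R => //= v vs IH R; exact: subset_trans (IH _) (row_step_sub _ _). Qed.

Lemma unfilled_sub k R : unfilled k R \subset R.
Proof. by elim: k => //= k IH; exact: subset_trans (foldl_row_step_sub _ _) IH. Qed.

Lemma unfilledSr k R : unfilled k.+1 R = unfilled k (row_rest R).
Proof. exact: iterSr. Qed.

Lemma unfilledD m n R : unfilled (m + n) R = unfilled m (unfilled n R).
Proof. exact: iterD. Qed.

Lemma rowpass_row i vs R x : x \in (rowpass ke i vs R).2 -> x.1.2 = i.
Proof.
elim: vs R => //= v vs IH R; case: maxedge => [e|]; last exact: IH.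
by rewrite inE => /orP[/eqP -> // | /IH].
Qed.

Lemma mem_rowpass i vs R e :
  (e \in [seq x.1.1 | x <- (rowpass ke i vs R).2]) = (e \in R :\: foldl row_step R vs).
Proof.
elim: vs R => [|v vs IH] R /=; first by rewrite setDv inE.
rewrite /row_step; case: maxedgeP => [a aR _ _ | _]; last exact: IH.
have a_rest : a \notin foldl row_step (R :\ a) vs.
  by apply/negP => /(subsetP (foldl_row_step_sub _ _)); rewrite !inE eqxx.
rewrite /= inE IH !inE; case: eqVneq => [-> | _] //=.
by rewrite a_rest aR.
Qed.

Lemma allrowsS k i R :
  allrows rv ke k.+1 i R = (rowpass ke i (vorder rv) R).2 ++ allrows rv ke k i.+1 (row_rest R).
Proof. by rewrite /= rowpass_rest. Qed.

Lemma allrowsD a b i R :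
  allrows rv ke (a + b) i R = allrows rv ke a i R ++ allrows rv ke b (i + a) (unfilled a R).
Proof.
elim: a i R => [|a IH] i R /=; first by rewrite addn0.
by rewrite IH rowpass_rest catA addnS -addSn -unfilledSr.
Qed.

Lemma allrows_row k i R x : x \in allrows rv ke k i R -> i <= x.1.2 < i + k.
Proof.
elim: k i R => //= k IH i R; rewrite mem_cat => /orP[/rowpass_row -> | /IH].
  by rewrite leqnn addnS ltnS leq_addr.
by rewrite addnS -addSn => /andP[/ltnW -> ->].
Qed.

Lemma mem_allrows k i R e :
  (e \in [seq x.1.1 | x <- allrows rv ke k i R]) = (e \in R :\: unfilled k R).
Proof.
elim: k i R => [|k IH] i R; first by rewrite /= setDv inE.
rewrite allrowsS map_cat mem_cat mem_rowpass IH unfilledSr !inE.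
have U_rest := subsetP (unfilled_sub k (row_rest R)) e.
have rest_R := subsetP (foldl_row_step_sub (vorder rv) R) e.
case: (boolP (e \in row_rest R)) => [e_rest | e_nrest] /=.
  by rewrite rest_R.
by rewrite (contraNN U_rest e_nrest) orbF.
Qed.

Lemma card_foldl_row_step_lt vs R e v : v \in vs -> e \in R -> v \in e ->
  #|foldl row_step R vs| < #|R|.
Proof.
elim: vs R => //= w vs IH R; rewrite inE => v_vs eR ve.
rewrite [row_step R w]/row_step; case: (maxedgeP R w) => [a aR _ _ | no_max].
  apply: leq_ltn_trans (subset_leq_card (foldl_row_step_sub _ _)) _.
  by rewrite (cardsD1 a R) aR add1n.
case/orP: v_vs => [/eqP vw | v_vs]; last exact: IH.
by rewrite vw (negPf (no_max e eR)) in ve.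
Qed.

Lemma card_row_rest_lt R : R \subset E -> R != set0 -> #|row_rest R| < #|R|.
Proof.
move=> RE /set0Pn[e eR]; have /set0Pn[v ve] := edge_neq0 (subsetP RE e eR).
by apply: (card_foldl_row_step_lt _ eR ve); rewrite mem_sort mem_enum.
Qed.

Lemma unfilled_eq0 k R : R \subset E -> #|R| <= k -> unfilled k R = set0.
Proof.
elim: k R => [|k IH] R RE le_Rk; first by apply/eqP; rewrite -cards_eq0 -leqn0.
have rest_E : row_rest R \subset E := subset_trans (foldl_row_step_sub _ _) RE.
rewrite unfilledSr; apply: IH => //; case: (eqVneq R set0) => [R0 | /(card_row_rest_lt RE)].
  by rewrite (leq_trans (subset_leq_card (foldl_row_step_sub _ _))) // R0 cards0.
by move=> lt_rest; rewrite -ltnS (leq_trans lt_rest).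
Qed.

Lemma hgt_gtE k R e : R \subset E -> e \in R ->
  (k < hgt rv ke R e) = (e \in unfilled k R).
Proof.
move=> RE eR.
have hgtE : hgt rv ke R e = row_of (allrows rv ke #|R| 1 R) e by [].
have U0 : unfilled #|R| R = set0 := unfilled_eq0 RE (leqnn _).
have hgt_small j : j <= #|R| -> (j < hgt rv ke R e) = (e \in unfilled j R).
  move=> le_jR; rewrite hgtE -(subnKC le_jR) allrowsD row_of_cat.
  case: ifP => [e_first | /negbT].
    have [b /allrows_row /andP[_ lt_row]] := row_ofP e_first.
    move: e_first; rewrite mem_allrows inE => /andP[/negPf -> _].
    by apply/negbTE; rewrite -leqNgt.
  rewrite mem_allrows !inE eR andbT negbK => e_unf.
  have e_later : e \in [seq x.1.1 | x <- allrows rv ke (#|R| - j) (1 + j) (unfilled j R)].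
    by rewrite mem_allrows -unfilledD subnK // U0 !inE e_unf.
  have [b /allrows_row /andP[le_row _]] := row_ofP e_later.
  by rewrite e_unf.
case: (leqP k #|R|) => [/hgt_small // | lt_Rk].
have := hgt_small _ (leqnn _); rewrite U0 inE => /negbT; rewrite -leqNgt => le_hgt.
rewrite unfilled_eq0 ?inE ?(ltnW lt_Rk) //; apply/negbTE; rewrite -leqNgt.
exact: leq_trans le_hgt (ltnW lt_Rk).
Qed.

Lemma row_step_setD R X v : R \subset E -> X \subset row_step R v ->
  row_step (R :\: X) v = row_step R v :\: X.
Proof.
move=> RE; rewrite /row_step; case: (maxedgeP R v) => [a aR va a_max | no_max] X_sub.
  have aX : a \notin X by apply/negP => /(subsetP X_sub); rewrite !inE eqxx.
  have aRX : a \in R :\: X by rewrite inE aX aR.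
  rewrite (maxedge_eq (subset_trans (subsetDl R X) RE) aRX va) => [|f /setDP[fR _]].
    by rewrite !setDDl setUC.
  exact: a_max.
by rewrite maxedge_none // => f /setDP[fR _]; exact: no_max.
Qed.

Lemma foldl_row_step_setD vs R X : R \subset E -> X \subset foldl row_step R vs ->
  foldl row_step (R :\: X) vs = foldl row_step R vs :\: X.
Proof.
elim: vs R => //= v vs IH R RE X_sub.
rewrite row_step_setD ?IH //; first exact: subset_trans (row_step_sub _ _) RE.
exact: subset_trans X_sub (foldl_row_step_sub _ _).
Qed.

Lemma unfilled_setD k R X : R \subset E -> X \subset unfilled k R ->
  unfilled k (R :\: X) = unfilled k R :\: X.
Proof.
move=> RE; elim: k => //= k IH X_sub.
rewrite IH; last exact: subset_trans X_sub (foldl_row_step_sub _ _).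
by apply: foldl_row_step_setD => //; exact: subset_trans (unfilled_sub _ _) RE.
Qed.

Lemma row_step_subset R R' v : R \subset E -> R' \subset R ->
  row_step R' v \subset row_step R v.
Proof.
move=> RE R'R; rewrite [row_step R v]/row_step.
case: (maxedgeP R v) => [a aR va a_max | no_max]; last first.
  by rewrite /row_step maxedge_none // => f /(subsetP R'R); exact: no_max.
case: (boolP (a \in R')) => aR'.
  rewrite /row_step (maxedge_eq (subset_trans R'R RE) aR' va) ?setSD // => f /(subsetP R'R).
  exact: a_max.
apply: subset_trans (row_step_sub R' v) _; apply/subsetP => x xR'.
by rewrite !inE (subsetP R'R x xR') andbT; apply: contraNneq aR' => <-.
Qed.

Lemma card_row_step R v : #|R| <= #|row_step R v|.+1.
Proof. by rewrite /row_step; case: maxedgeP => [a aR _ _ | _] //; rewrite (cardsD1 a R) aR. Qed.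

Definition sub_within n R' R := (R' \subset R) && (#|R :\: R'| <= n).

Lemma row_step_sub_within n R R' v : R \subset E -> sub_within n R' R ->
  sub_within n (row_step R' v) (row_step R v).
Proof.
move=> RE /andP[R'R]; rewrite /sub_within row_step_subset //= !cardsDS ?row_step_subset //.
move: (card_row_step R' v); rewrite [row_step R v]/row_step.
case: (maxedgeP R v) => [a aR va a_max | no_max]; last first.
  by rewrite /row_step maxedge_none // => f /(subsetP R'R); exact: no_max.
rewrite (cardsD1 a R) aR add1n; case: (boolP (a \in R')) => aR'; last first.
  by move=> le_R' le_n; apply: leq_trans le_n; rewrite -subSS; exact: leq_sub2l.
rewrite /row_step (maxedge_eq (subset_trans R'R RE) aR' va) => [|f /(subsetP R'R)].
  by rewrite (cardsD1 a R') aR' add1n subSS.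
exact: a_max.
Qed.

Lemma foldl_row_step_sub_within n vs R R' : R \subset E -> sub_within n R' R ->
  sub_within n (foldl row_step R' vs) (foldl row_step R vs).
Proof.
elim: vs R R' => //= v vs IH R R' RE R'R; apply: IH; last exact: row_step_sub_within.
exact: subset_trans (row_step_sub _ _) RE.
Qed.

Lemma unfilled_sub_within n k R R' : R \subset E -> sub_within n R' R ->
  sub_within n (unfilled k R') (unfilled k R).
Proof.
move=> RE R'R; elim: k => //= k IH; apply: foldl_row_step_sub_within IH.
exact: subset_trans (unfilled_sub _ _) RE.
Qed.

Lemma card_setD_unfilled k (S T : {set {set V}}) : S \subset unfilled k E ->
  #|(S :\: T) :\: unfilled k (E :\: T)| <= #|T :\: S|.
Proof.
move=> S_unf; set X := S :&: T.
have UX : unfilled k (E :\: X) = unfilled k E :\: X.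
  exact: unfilled_setD (subxx E) (subset_trans (subsetIl S T) S_unf).
have ET : sub_within #|T :\: S| (E :\: T) (E :\: X).
  rewrite /sub_within setDS ?subsetIr //=; apply: subset_leq_card; apply/subsetP => x.
  by rewrite !inE; case: (x \in S); case: (x \in T); case: (x \in E).
have /andP[_ card_U] := unfilled_sub_within k (subsetDl E X) ET.
rewrite UX in card_U; apply: leq_trans card_U; apply/subset_leq_card/setSD.
by apply/subsetP => x /setDP[xS xT]; rewrite !inE xS (negPf xT) (subsetP S_unf x xS).
Qed.

End HeightTableTheory.

Theorem lemma3p2 (V : finType) (rv : V -> nat) (ke : {set V} -> nat)
    (E : {set {set V}})
    (hE : forall e, e \in E -> #|e| = 2)
    (hrv : injective rv)
    (hke : {in E &, injective ke})
    (S T : {set {set V}})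
    (hS : S \subset E) (hT : T \subset E) (hST : #|T| < #|S|) :
  exists2 e, e \in S :\: T &
    exists2 f, f \in S & hgt rv ke E f <= hgt rv ke (E :\: T) e.
Proof.
have edge_neq0 e : e \in E -> e != set0 by move=> eE; rewrite -card_gt0 hE.
have [f1 f1S] : exists f, f \in S by apply/set0Pn; rewrite -card_gt0 (leq_ltn_trans _ hST).
have [f0 f0S f0_min] := @arg_minnP _ f1 (mem S) (hgt rv ke E) f1S.
set k := (hgt rv ke E f0).-1.
have hgt_f0 : hgt rv ke E f0 = k.+1.
  by rewrite prednK // (hgt_gtE _ _ edge_neq0 0 (subxx E)) ?(subsetP hS).
have S_unf : S \subset unfilled rv ke k E.
  apply/subsetP => f fS; rewrite -(hgt_gtE _ _ edge_neq0 k (subxx E)) ?(subsetP hS) //.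
  by rewrite -ltnS -hgt_f0 ltnS f0_min.
have lt_card : #|T :\: S| < #|S :\: T|.
  have := subset_leq_card (subsetIr S T); rewrite !cardsD setIC; lia.
have : 0 < #|(S :\: T) :&: unfilled rv ke k (E :\: T)|.
  have := leq_ltn_trans (card_setD_unfilled hke T S_unf) lt_card.
  rewrite -[X in _ < X](cardsID (unfilled rv ke k (E :\: T))).
  by rewrite -[X in X < _]add0n ltn_add2r.
rewrite card_gt0 => /set0Pn[e /setIP[eST e_unf]].
exists e => //; exists f0 => //.
by rewrite hgt_f0 (hgt_gtE _ _ edge_neq0) ?subsetDl ?(subsetP (setSD T hS)).
Qed.
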